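(* For each integer $n\ge0$ let \[ \theta^\Delta_n(x)=\sum_{k=0}^n\frac{(n+k)!}{2^k(n-k)!\,k!}\,(x)_{n-k}, \] where $(x)_j=x(x-1)\cdots(x-j+1)$ and $(x)_0=1$. Then for every integer $n\ge0$ and every $x\in\mathbb{C}$, \[ (x-2n)\,\theta^\Delta_n(x+1)-4(x-n)\,\theta^\Delta_n(x)+3x\,\theta^\Delta_n(x-1)=0 . \]
   Context: $\theta^\Delta_n$ is called the difference reverse Bessel polynomial of degree $n$. *)

From HB Require Import structures.
From mathcomp Require Import all_boot all_order all_algebra.
From mathcomp Require Import complex.
From mathcomp Require Import reals.
Set Implicit Arguments. Unset Strict Implicit. Unset Printing Implicit Defensive.
Import Order.TTheory GRing.Theory Num.Theory.
Local Open Scope ring_scope.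

Definition falling {F : pzRingType} (x : F) (j : nat) : F :=
  \prod_(i < j) (x - i%:R).

Definition theta_delta {F : fieldType} (n : nat) (x : F) : F :=
  \sum_(k < n.+1)
    ((n + k)`!%:R / (2 ^ k * (n - k)`! * k`!)%:R) * falling x (n - k).

From HB Require Import structures.
From mathcomp Require Import all_boot all_order all_algebra.
From mathcomp Require Import complex.
From mathcomp Require Import reals ring.
Import GRing.Theory Num.Theory.
Local Open Scope ring_scope.
Local Open Scope complex_scope.

(* Write theta_n(y) = sum_k c_(n,k) (y)_(n-k).  Using (y+1)_(m+1) = (y+1) (y)_m
   and y (y-1)_m = (y)_(m+1), the k-th summand of the left-hand side becomes
   c_(n,k) (y)_(n-k-1) times a polynomial that is linear in y, and the ratio
   c_(n,k+1) / c_(n,k) = (n-k)(n+k+1) / (2(k+1)) makes it the difference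
   v_k - v_(k+1) of v_k := 2 k c_(n,k) (y)_(n-k).  The sum telescopes to
   v_0 = 0. *)

Section Falling.

Variable R : pzRingType.

Lemma falling0 (y : R) : falling y 0 = 1.
Proof. exact: big_ord0. Qed.

Lemma fallingSr (y : R) j : falling y j.+1 = falling y j * (y - j%:R).
Proof. by rewrite /falling big_ord_recr. Qed.

Lemma fallingS (y : R) j : falling y j.+1 = y * falling (y - 1) j.
Proof.
rewrite /falling big_ord_recl subr0; congr (_ * _).
by apply: eq_bigr => i _; rewrite lift0 /= mulrS opprD addrA.
Qed.

End Falling.

Section ThetaDelta.

Variable F : fieldType.
Hypothesis F_char0 : [pchar F] =i pred0.

Definition theta_coef (n k : nat) : F :=
  (n + k)`!%:R / (2 ^ k * (n - k)`! * k`!)%:R.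

Lemma theta_deltaE n y :
  theta_delta n y = \sum_(k < n.+1) theta_coef n k * falling y (n - k).
Proof. by []. Qed.

Lemma theta_coefS n k : (k < n)%N ->
  2 * k.+1%:R * theta_coef n k.+1
  = (n - k)%:R * (n + k).+1%:R * theta_coef n k.
Proof.
move=> lt_kn; rewrite /theta_coef -(subnSK lt_kn).
rewrite addnS !factS expnS !natrM.
have natf_neq0 m : (0 < m)%N -> m%:R != 0 :> F.
  by rewrite (pcharf0P _).1 // -lt0n.
by field; rewrite !nat1r !natf_neq0 ?fact_gt0 ?expn_gt0.
Qed.

Lemma theta_delta_summandE n k (x : F) : (k < n)%N ->
  (x - (2 * n)%:R) * (theta_coef n k * falling (x + 1) (n - k))
  - 4%:R * (x - n%:R) * (theta_coef n k * falling x (n - k))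
  + 3%:R * x * (theta_coef n k * falling (x - 1) (n - k))
  = 2 * k%:R * theta_coef n k * falling x (n - k)
    - 2 * k.+1%:R * theta_coef n k.+1 * falling x (n - k.+1).
Proof.
move=> lt_kn; rewrite theta_coefS //.
have [j ->] : exists j, n = (k + j.+1)%N.
  by exists (n - k.+1)%N; rewrite subnSK // subnKC // ltnW.
rewrite addKn addnS subSS addKn.
rewrite -[3%:R * x * _]mulrA (mulrCA x) -fallingS (fallingS _ (x + 1)) addrK.
rewrite !fallingSr !(natrM, natrD, mulrS); ring.
Qed.

Lemma theta_delta_recurrence n (x : F) :
  (x - (2 * n)%:R) * theta_delta n (x + 1)
  - 4%:R * (x - n%:R) * theta_delta n x
  + 3%:R * x * theta_delta n (x - 1) = 0.
Proof.
pose v k := 2 * k%:R * theta_coef n k * falling x (n - k).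
have telescope : \sum_(k < n) (v k - v k.+1) = v 0%N - v n.
  rewrite -[LHS]opprK -sumrN; under eq_bigr do rewrite opprB.
  by rewrite -(big_mkord xpredT (fun k => v k.+1 - v k)) telescope_sumr // opprB.
rewrite !theta_deltaE !mulr_sumr -sumrB -big_split big_ord_recr /=.
transitivity (\sum_(k < n) (v k - v k.+1) + v n).
  congr (_ + _); last by rewrite /v subnn !falling0 natrM; ring.
  by apply: eq_bigr => k _; rewrite theta_delta_summandE.
by rewrite telescope subrK /v mulr0 !mul0r.
Qed.

End ThetaDelta.

Theorem mainTheorem11 (R : realType) (n : nat) (x : R[i]) :
  (x - (2 * n)%:R) * theta_delta n (x + 1)
  - 4%:R * (x - n%:R) * theta_delta n x
  + 3%:R * x * theta_delta n (x - 1) = 0.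
Proof. exact/theta_delta_recurrence/pchar_num. Qed.
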